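(* Let $\|\cdot\|$ be a norm on $\mathbb{R}^d$ and $T:\mathbb{R}^d\to\mathbb{R}^d$ nonexpansive for it with $\operatorname{Fix}T\neq\emptyset$. Let $\tilde T:\mathbb{R}^d\times\Xi\to\mathbb{R}^d$ be a stochastic oracle with $\mathbb{E}(\tilde T(x,\xi))=Tx$ for $\xi\sim\mathcal{D}_x$, and with uniformly bounded variance: $\sup_{x}\mathbb{E}(\|\tilde T(x,\xi)-Tx\|_2^2)\le\sigma^2$. Consider the stochastic Halpern method: given $x^0$, for $n=1,\dots,N$, draw $k_n$ independent samples $\xi_{n,1},\dots,\xi_{n,k_n}\sim\mathcal{D}_{x^{n-1}}$ and set $x^n=(1-\beta_n)x^0+\beta_n\frac{1}{k_n}\sum_{j=1}^{k_n}\tilde T(x^{n-1},\xi_{n,j})$, with $\beta_n=\frac{n}{n+1}$. Then, given $\varepsilon>0$, this method with $k_n=n^4$ returns a point $x^N$ with $\mathbb{E}(\|x^N-Tx^N\|)\le\varepsilon$ using at most $\tilde O(\varepsilon^{-5})$ queries to the stochastic oracle $\tilde T$.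
   Context: $\|\cdot\|_2$ is the Euclidean norm. $\tilde O$ denotes big-$O$ ignoring logarithmic factors. The number of queries is the total number $\sum_{n=1}^N k_n$ of evaluations of $\tilde T$. The stepsize $\beta_n=n/(n+1)$ is the one used throughout the paper's explicit results. *)

From HB Require Import structures.
From mathcomp Require Import all_boot all_order all_algebra.
From mathcomp Require Import all_classical all_reals all_analysis.
From mathcomp Require Import measurable_realfun.
Set Implicit Arguments. Unset Strict Implicit. Unset Printing Implicit Defensive.
Import Order.TTheory GRing.Theory Num.Theory.
Local Open Scope classical_set_scope.
Local Open Scope ring_scope.

(* R^d with its Borel sigma-algebra (generated by the open sets of the
   product topology on row vectors). Definitionally equal to 'rV[R]_d. *)
Section Rd_def.
Import numFieldNormedType.Exports.
Variables (R : realType) (d : nat).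
Definition Rd := g_sigma_algebraType (@open 'rV[R]_d).
HB.instance Definition _ := Measurable.on Rd.
End Rd_def.

Definition is_norm (R : realType) (d : nat) (nrm : 'rV[R]_d -> R) : Prop :=
  [/\ forall x, nrm x = 0 -> x = 0,
      forall (a : R) x, nrm (a *: x) = `|a| * nrm x
    & forall x y, nrm (x + y) <= nrm x + nrm y].

Definition sqnorm2 (R : realType) (d : nat) (v : 'rV[R]_d) : R :=
  \sum_(i < d) (v ord0 i) ^+ 2.

Definition nonexpansive (R : realType) (d : nat) (nrm : 'rV[R]_d -> R)
  (T : 'rV[R]_d -> 'rV[R]_d) : Prop :=
  forall x y, nrm (T x - T y) <= nrm (x - y).

(* Integral of g(xi_1,...,xi_k) for xi_1,...,xi_k i.i.d. with law P
   (iterated integral against the k-fold product of P). *)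
Fixpoint iid_int (R : realType) (dX : measure_display) (Xi : measurableType dX)
  (P : {measure set Xi -> \bar R}) (k : nat) (g : seq Xi -> \bar R) : \bar R :=
  match k with
  | 0 => g [::]
  | k'.+1 => (\int[P]_xi iid_int P k' (fun s => g (xi :: s)))%E
  end.

(* One step of the stochastic Halpern method at iteration n from x^{n-1} = x
   with the drawn samples s = [xi_{n,1}; ...; xi_{n,k_n}]. *)
Definition halpern_step (R : realType) (d : nat) (Xi : Type)
  (Tt : 'rV[R]_d -> Xi -> 'rV[R]_d) (x0 : 'rV[R]_d)
  (beta : nat -> R) (k : nat -> nat) (n : nat) (x : 'rV[R]_d) (s : seq Xi)
  : 'rV[R]_d :=
  (1 - beta n) *: x0 + beta n *: ((k n)%:R^-1 *: \sum_(xi <- s) Tt x xi).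

(* halpern_exp ... r n x f = E[ f(x^{n+r}) | x^n = x ], where at each
   iteration m the k_m samples are drawn i.i.d. from D_{x^{m-1}}
   (backward recursion along the Markov chain of iterates). *)
Fixpoint halpern_exp (R : realType) (d : nat) (dX : measure_display)
  (Xi : measurableType dX) (D : R.-pker (Rd R d) ~> Xi)
  (Tt : 'rV[R]_d -> Xi -> 'rV[R]_d) (x0 : 'rV[R]_d)
  (beta : nat -> R) (k : nat -> nat) (f : 'rV[R]_d -> \bar R)
  (r n : nat) (x : 'rV[R]_d) : \bar R :=
  match r with
  | 0 => f x
  | r'.+1 => iid_int (D x) (k n.+1)
      (fun s => halpern_exp D Tt x0 beta k f r' n.+1
                  (halpern_step Tt x0 beta k n.+1 x s))
  end.

Definition halpern_expect (R : realType) (d : nat) (dX : measure_display)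
  (Xi : measurableType dX) (D : R.-pker (Rd R d) ~> Xi)
  (Tt : 'rV[R]_d -> Xi -> 'rV[R]_d) (x0 : 'rV[R]_d)
  (beta : nat -> R) (k : nat -> nat) (N : nat) (f : 'rV[R]_d -> \bar R)
  : \bar R :=
  halpern_exp D Tt x0 beta k f N 0 x0.

(* Compare the stochastic iterates x^n with the deterministic Halpern iterates
   y^n (same anchor x^0 and stepsizes beta_n = n/(n+1)).  For a fixed point z,
   y^n stays in the ball of radius R0 = ||x^0 - z|| around z, and
   (n+2) ||y^(n+1) - y^n|| <= 2 R0 (1 + H_n) with H_n the harmonic numbers,
   whence ||y^N - T y^N|| <= 2 R0 (2 + H_N) / (N+1).  Since T is nonexpansive,
   ||x^n - y^n|| <= beta_n (||x^(n-1) - y^(n-1)|| + ||e_n||), where e_n is the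
   error of the mean of k_n = n^4 samples; by Jensen's inequality and the
   comparison of ||.|| with the Euclidean norm, E ||e_n|| <= c sigma / n^2.
   Unrolling gives E ||x^N - y^N|| <= c sigma H_N / (N+1), so the expected
   residual is O(log N / N).  It is below eps for some N = O(eps^-1 log(1/eps)),
   and the oracle is called sum_(n <= N) n^4 <= N^5 times. *)

From HB Require Import structures.
From mathcomp Require Import all_boot all_order all_algebra.
From mathcomp Require Import all_classical all_reals all_analysis.
From mathcomp Require Import measurable_realfun.
From mathcomp Require Import ring lra.
Import Order.TTheory GRing.Theory Num.Theory.
Local Open Scope classical_set_scope.
Local Open Scope ring_scope.

Section integral_facts.
Local Open Scope ereal_scope.
Context {d : measure_display} {T : measurableType d} {R : realType}
  {mu : {measure set T -> \bar R}}.

(* The integral of a nonnegative function is a supremum over the simple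
   functions below it, so no measurability is needed for monotonicity. *)
Lemma ge0_le_integralT (f g : T -> \bar R) :
  (forall x, 0 <= f x) -> (forall x, f x <= g x) ->
  \int[mu]_x f x <= \int[mu]_x g x.
Proof.
move=> f0 fg.
have g0 x : 0 <= g x by exact: le_trans (f0 x) (fg x).
rewrite (ge0_integralTE _ f0) (ge0_integralTE _ g0).
apply: ereal_sup_le => _ [h hf <-]; exists h => //= x.
exact: le_trans (hf x) (fg x).
Qed.

Hypothesis mu1 : mu setT = 1.

Lemma prob_integral_cst (c : R) : \int[mu]_x (EFin \o cst c) x = c%:E.
Proof. by rewrite (eq_integral (cst c%:E)) // integral_cst // mu1 mule1. Qed.

Lemma prob_integrable_cst (c : R) : mu.-integrable setT (EFin \o cst c).
Proof.
apply/integrableP; split; first exact/measurable_EFinP/measurable_cst.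
by rewrite (eq_integral (EFin \o cst `|c|%R)) // prob_integral_cst ltry.
Qed.

End integral_facts.

Section iid_int.
Local Open Scope ereal_scope.
Context {R : realType} {dX : measure_display} {Xi : measurableType dX}.
Variable P : {measure set Xi -> \bar R}.

Lemma iid_int_ge0 k g :
  (forall s, size s = k -> 0 <= g s) -> 0 <= iid_int P k g.
Proof.
elim: k g => [|k IH] g g0 /=; first exact: g0.
by apply: integral_ge0 => xi _; apply: IH => s sk; apply: g0; rewrite /= sk.
Qed.

Lemma le_iid_int k g h :
  (forall s, size s = k -> 0 <= g s <= h s) -> iid_int P k g <= iid_int P k h.
Proof.
elim: k g h => [|k IH] g h gh /=; first by case/andP: (gh [::] erefl).
apply: ge0_le_integralT => xi.
  by apply: iid_int_ge0 => s sk; have /andP[] := gh (xi :: s) (congr1 S sk).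
by apply: IH => s sk; apply: gh; rewrite /= sk.
Qed.

End iid_int.

Lemma sqnorm2_ge0 (R : realType) n (v : 'rV[R]_n) : 0 <= sqnorm2 v.
Proof. by apply: sumr_ge0 => i _; exact: sqr_ge0. Qed.

Lemma sqnorm20 (R : realType) n : sqnorm2 (0 : 'rV[R]_n) = 0.
Proof. by rewrite /sqnorm2 big1 // => i _; rewrite mxE expr0n. Qed.

Lemma sqnorm2D (R : realType) n (w v : 'rV[R]_n) :
  sqnorm2 (w + v) =
  sqnorm2 w + \sum_(i < n) 2 * w ord0 i * v ord0 i + sqnorm2 v.
Proof.
rewrite /sqnorm2 -!big_split /=; apply: eq_bigr => i _; rewrite mxE; ring.
Qed.

Lemma sqrt_le_tangent (R : realType) (y u : R) : 0 <= y -> 0 < u ->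
  Num.sqrt y <= (y + u) / (2 * Num.sqrt u).
Proof.
move=> y0 u0; have su0 : 0 < Num.sqrt u by rewrite sqrtr_gt0.
rewrite ler_pdivlMr ?mulr_gt0 //.
rewrite -[in leRHS](sqr_sqrtr y0) -[in leRHS](sqr_sqrtr (ltW u0)).
have := sqr_ge0 (Num.sqrt y - Num.sqrt u); rewrite sqrrB; lra.
Qed.

Section centered_samples.
Local Open Scope ereal_scope.
Context {R : realType} {dX : measure_display} {Xi : measurableType dX}.
Context {n : nat}.
Variables (P : {measure set Xi -> \bar R}) (u : Xi -> 'rV[R]_n) (m : 'rV[R]_n).
Variable s2 : R.
Hypothesis P1 : P setT = 1.
Hypothesis u_mean : forall i,
  P.-integrable setT (fun xi => (u xi ord0 i)%:E) /\
  \int[P]_xi (u xi ord0 i)%:E = (m ord0 i)%:E.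
Hypothesis u_var : \int[P]_xi (sqnorm2 (u xi - m))%:E <= s2%:E.

Lemma integrable_centered i :
  P.-integrable setT (fun xi => ((u xi - m) ord0 i)%:E).
Proof.
have := integrableB measurableT (u_mean i).1
  (prob_integrable_cst P1 (m ord0 i)).
by apply: eq_integrable => // xi _; rewrite !mxE EFinB.
Qed.

Lemma integral_centered i : \int[P]_xi ((u xi - m) ord0 i)%:E = 0.
Proof.
under eq_integral => xi _ do rewrite !mxE EFinB.
rewrite integralB //; [|exact: (u_mean i).1|exact: prob_integrable_cst].
by rewrite (u_mean i).2 prob_integral_cst // subee.
Qed.

Let cross (w : 'rV[R]_n) xi :=
  (\sum_(i < n) 2 * w ord0 i * (u xi - m) ord0 i)%R.

Let cross_sum (w : 'rV[R]_n) :
  (fun xi => (cross w xi)%:E) =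
  (fun xi => \sum_(i < n) (2 * w ord0 i)%:E * ((u xi - m) ord0 i)%:E).
Proof.
by apply: funext => xi; rewrite /cross -sumEFin; apply: eq_bigr => i _.
Qed.

Lemma integrable_cross w : P.-integrable setT (fun xi => (cross w xi)%:E).
Proof.
rewrite cross_sum; apply: integrable_sum => // i _.
exact/integrableZl/integrable_centered.
Qed.

Lemma integral_cross w : \int[P]_xi (cross w xi)%:E = 0.
Proof.
rewrite cross_sum integral_sum //; last first.
  by move=> i; exact/integrableZl/integrable_centered.
rewrite big1 // => i _.
by rewrite integralZl ?integral_centered ?mule0 //; exact: integrable_centered.
Qed.

Lemma integrable_sqnorm2_centered :
  P.-integrable setT (fun xi => (sqnorm2 (u xi - m))%:E).
Proof.
apply/integrableP; split.
  apply/measurable_EFinP; apply: measurable_sum => i; apply: measurable_funX.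
  apply/measurable_EFinP; apply: measurable_int; exact: integrable_centered.
under eq_integral do rewrite gee0_abs ?lee_fin ?sqnorm2_ge0 //.
exact: le_lt_trans u_var (ltry _).
Qed.

Lemma integral_sqnorm2_shift_le w (a c : R) : (0 <= a)%R ->
  \int[P]_xi (a * sqnorm2 (w + (u xi - m)) + c)%:E
  <= (a * (sqnorm2 w + s2) + c)%:E.
Proof.
move=> a0; set c' := (a * sqnorm2 w + c)%R.
have isq := integrable_sqnorm2_centered.
have icr := integrable_cross w.
have icst := prob_integrable_cst P1 c'.
rewrite (eq_integral (fun xi => a%:E * (sqnorm2 (u xi - m))%:E +
   (a%:E * (cross w xi)%:E + (EFin \o cst c') xi))); last first.
  move=> xi _; rewrite /= -!EFinM -!EFinD sqnorm2D /cross /c'.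
  by congr (_%:E); ring.
rewrite integralD //;
  [|exact: integrableZl|by apply: integrableD => //; exact: integrableZl].
rewrite integralD //; last exact: integrableZl.
rewrite !integralZl //.
rewrite integral_cross mule0 add0e prob_integral_cst //.
rewrite (_ : (a * (sqnorm2 w + s2) + c)%:E = a%:E * s2%:E + c'%:E); last first.
  by rewrite -EFinM -EFinD /c'; congr (_%:E); ring.
by rewrite leeD2r // lee_wpmul2l // lee_fin.
Qed.

Hypothesis s2_gt0 : (0 < s2)%R.

(* Jensen's inequality for the square root, one sample at a time: the
   tangent line of the square root at the final variance turns the bound
   into a quadratic one, integrated by [integral_sqnorm2_shift_le]. *)
Lemma iid_int_sqrt_sum_le k w (a b : R) : (0 <= a)%R -> (0 <= b)%R ->
  iid_int P k
    (fun s => (a * Num.sqrt (sqnorm2 (w + \sum_(xi <- s) (u xi - m))) + b)%:E)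
  <= (a * Num.sqrt (sqnorm2 w + k%:R * s2) + b)%:E.
Proof.
elim: k w a b => [|k IH] w a b a0 b0 /=.
  by rewrite big_nil addr0 mul0r addr0.
set U := (sqnorm2 w + k.+1%:R * s2)%R.
have U0 : (0 < U)%R by rewrite ltr_wpDl ?sqnorm2_ge0 // mulr_gt0 // ltr0n.
have sU0 : (0 < Num.sqrt U)%R by rewrite sqrtr_gt0.
set al := (a / (2 * Num.sqrt U))%R.
have al0 : (0 <= al)%R by rewrite divr_ge0 // mulr_ge0 // ltW.
have le_IH xi : iid_int P k (fun s =>
    (a * Num.sqrt (sqnorm2 (w + \sum_(xi' <- xi :: s) (u xi' - m))) + b)%:E)
  <= (a * Num.sqrt (sqnorm2 (w + (u xi - m)) + k%:R * s2) + b)%:E.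
  under eq_fun do rewrite big_cons addrA.
  exact: IH.
have le_tangent xi :
  (a * Num.sqrt (sqnorm2 (w + (u xi - m)) + k%:R * s2) + b)%:E
  <= (al * sqnorm2 (w + (u xi - m)) + (al * (k%:R * s2 + U) + b))%:E.
  rewrite lee_fin (_ : al * _ + _ = a * ((sqnorm2 (w + (u xi - m))
                   + k%:R * s2 + U) / (2 * Num.sqrt U)) + b)%R; last first.
    by rewrite /al; ring.
  rewrite lerD2r ler_wpM2l // sqrt_le_tangent //.
  by rewrite addr_ge0 ?sqnorm2_ge0 // mulr_ge0 // ltW.
apply: (@le_trans _ _ (\int[P]_xi
    (al * sqnorm2 (w + (u xi - m)) + (al * (k%:R * s2 + U) + b))%:E)).
  apply: ge0_le_integralT => xi.
    apply: iid_int_ge0 => s _.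
    by rewrite lee_fin addr_ge0 // mulr_ge0 // sqrtr_ge0.
  exact: le_trans (le_IH xi) (le_tangent xi).
apply: le_trans (integral_sqnorm2_shift_le w _ _ al0) _.
rewrite lee_fin addrA lerD2r -mulrDr.
have -> : (sqnorm2 w + s2 + (k%:R * s2 + U) = Num.sqrt U ^+ 2 *+ 2)%R.
  by rewrite sqr_sqrtr ?(ltW U0) // /U -natr1; ring.
suff -> : (al * (Num.sqrt U ^+ 2 *+ 2) = a * Num.sqrt U)%R by [].
by rewrite /al mulr2n; field; rewrite gt_eqF.
Qed.

End centered_samples.

Definition euclid_const {R : realType} {d : nat} (nrm : 'rV[R]_d -> R) : R :=
  \sum_(j < d) nrm (delta_mx 0 j).

Section norm_facts.
Context {R : realType} {d : nat} {nrm : 'rV[R]_d -> R}.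
Hypothesis nrmP : is_norm nrm.

Lemma nrmZ a x : nrm (a *: x) = `|a| * nrm x.
Proof. by case: nrmP. Qed.

Lemma nrmD x y : nrm (x + y) <= nrm x + nrm y.
Proof. by case: nrmP. Qed.

Lemma nrm0 : nrm 0 = 0.
Proof. by rewrite -(scale0r (0 : 'rV[R]_d)) nrmZ normr0 mul0r. Qed.

Lemma nrmN x : nrm (- x) = nrm x.
Proof. by rewrite -scaleN1r nrmZ normrN normr1 mul1r. Qed.

Lemma nrm_ge0 x : 0 <= nrm x.
Proof. by have := nrmD x (- x); rewrite subrr nrm0 nrmN; lra. Qed.

Lemma nrm_distC x y : nrm (x - y) = nrm (y - x).
Proof. by rewrite -nrmN opprB. Qed.

Lemma nrm_distD x y z : nrm (x - z) <= nrm (x - y) + nrm (y - z).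
Proof. by rewrite (_ : x - z = (x - y) + (y - z)) ?nrmD // addrA subrK. Qed.

Lemma nrm_sum I (s : seq I) (F : I -> 'rV[R]_d) :
  nrm (\sum_(i <- s) F i) <= \sum_(i <- s) nrm (F i).
Proof.
elim: s => [|i s IH]; first by rewrite !big_nil nrm0.
by rewrite !big_cons; apply: le_trans (nrmD _ _) _; rewrite lerD2l.
Qed.

Lemma euclid_const_ge0 : 0 <= euclid_const nrm.
Proof. by apply: sumr_ge0 => j _; exact: nrm_ge0. Qed.

Lemma nrm_le_euclid u : nrm u <= euclid_const nrm * Num.sqrt (sqnorm2 u).
Proof.
rewrite {1}(row_sum_delta u); apply: le_trans (nrm_sum _ _ _) _.
rewrite /euclid_const mulr_suml; apply: ler_sum => j _.
rewrite nrmZ mulrC ler_wpM2l ?nrm_ge0 // -sqrtr_sqr ler_wsqrtr //.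
by rewrite /sqnorm2 (bigD1 j) //= lerDl; apply: sumr_ge0 => i _; exact: sqr_ge0.
Qed.

End norm_facts.

Lemma series_harmonic_ge0 (R : realType) n : 0 <= series (@harmonic R) n.
Proof. by apply: sumr_ge0 => k _; exact: harmonic_ge0. Qed.

Lemma le_series_harmonic (R : realType) m n : (m <= n)%N ->
  series (@harmonic R) m <= series harmonic n.
Proof. exact: (nondecreasing_series (fun k _ _ => harmonic_ge0 k)). Qed.

Fixpoint halpern_det {R : realType} {d : nat} (T : 'rV[R]_d -> 'rV[R]_d)
    (beta : nat -> R) (x0 : 'rV[R]_d) (n : nat) : 'rV[R]_d :=
  if n is n'.+1 then (1 - beta n) *: x0 + beta n *: T (halpern_det T beta x0 n')
  else x0.

Definition halpern_beta (R : realType) (n : nat) : R := n%:R / n.+1%:R.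

Lemma halpern_beta_ge0 (R : realType) n : 0 <= halpern_beta R n.
Proof. by rewrite divr_ge0. Qed.

Lemma halpern_beta_le1 (R : realType) n : halpern_beta R n <= 1.
Proof. by rewrite ler_pdivrMr ?ltr0n // mul1r ler_nat. Qed.

Lemma onem_halpern_beta (R : realType) n : 1 - halpern_beta R n = n.+1%:R^-1.
Proof.
have n1 : n.+1%:R != 0 :> R by rewrite pnatr_eq0.
by move: n1; rewrite /halpern_beta -natr1 => n1; field.
Qed.

Section halpern_deterministic.
Context {R : realType} {d : nat} {nrm : 'rV[R]_d -> R}.
Context {T : 'rV[R]_d -> 'rV[R]_d} {x0 z : 'rV[R]_d}.
Hypothesis nrmP : is_norm nrm.
Hypothesis T_ne : nonexpansive nrm T.
Hypothesis Tz : T z = z.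
Let y := halpern_det T (halpern_beta R) x0.
Let R0 := nrm (x0 - z).

Lemma halpern_det_bounded n : nrm (y n - z) <= R0.
Proof.
elim: n => [//|n IH]; set b := halpern_beta R n.+1.
have -> : y n.+1 - z = (1 - b) *: (x0 - z) + b *: (T (y n) - T z).
  by apply/rowP => i; rewrite /y /b /= !mxE Tz; ring.
apply: le_trans (nrmD nrmP _ _) _.
have b0 : 0 <= b by exact: halpern_beta_ge0.
have b1 : b <= 1 by exact: halpern_beta_le1.
rewrite !(nrmZ nrmP) !ger0_norm ?subr_ge0 //.
have : b * nrm (T (y n) - T z) <= b * R0.
  by rewrite ler_wpM2l // (le_trans (T_ne _ _) IH).
rewrite /R0; nra.
Qed.

Lemma halpern_det_T_x0 n : nrm (T (y n) - x0) <= 2 * R0.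
Proof.
apply: le_trans (nrm_distD nrmP _ (T z) _) _.
rewrite Tz (nrm_distC nrmP z).
by have := le_trans (T_ne (y n) z) (halpern_det_bounded n); rewrite Tz /R0; lra.
Qed.

Lemma halpern_det_diff_rec n :
  n.+3%:R * nrm (y n.+2 - y n.+1) <=
  n.+2%:R * nrm (y n.+1 - y n) + 2 * R0 / n.+2%:R.
Proof.
set m : R := n.+2%:R.
have m0 : 0 < m by rewrite ltr0n.
have Em1 : n.+3%:R = m + 1 by rewrite -natr1.
have Em2 : n.+1%:R = m - 1 by rewrite /m -(natr1 n.+1) addrK.
have -> : y n.+2 - y n.+1 = (m * (m + 1))^-1 *: (T (y n) - x0)
                            + (m / (m + 1)) *: (T (y n.+1) - T (y n)).
  apply/rowP => i; rewrite /y /= !mxE /halpern_beta Em1 Em2 -/m.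
  by field; rewrite !gt_eqF //; lra.
rewrite Em1; apply: le_trans (ler_wpM2l _ (nrmD nrmP _ _)) _; first lra.
rewrite !(nrmZ nrmP) !ger0_norm ?divr_ge0 ?invr_ge0 ?mulr_ge0; try lra.
have -> : (m + 1) * ((m * (m + 1))^-1 * nrm (T (y n) - x0) +
           m / (m + 1) * nrm (T (y n.+1) - T (y n))) =
          nrm (T (y n) - x0) / m + m * nrm (T (y n.+1) - T (y n)).
  by field; rewrite !gt_eqF //; lra.
rewrite addrC; apply: lerD.
  by rewrite ler_wpM2l ?T_ne //; lra.
by rewrite ler_pM2r ?invr_gt0 // halpern_det_T_x0.
Qed.

Lemma halpern_det_diff n :
  n.+2%:R * nrm (y n.+1 - y n) <= 2 * R0 * (1 + series harmonic n).
Proof.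
elim: n => [|n IH].
  rewrite /series /= big_geq // addr0 mulr1.
  have -> : y 1 - y 0 = 2^-1 *: (T x0 - x0).
    by apply/rowP => i; rewrite /y /= !mxE /halpern_beta; field.
  rewrite (nrmZ nrmP) ger0_norm // mulrA mulfV ?mul1r //.
  exact: (halpern_det_T_x0 0).
apply: le_trans (halpern_det_diff_rec n) _.
rewrite seriesSr /= mulrDr mulrDr addrA -mulrDr -mulrA lerD //.
have R00 : 0 <= R0 by exact: nrm_ge0.
by rewrite mulrA ler_wpM2l ?mulr_ge0 // lef_pV2 ?posrE ?ltr0n // ler_nat.
Qed.

Lemma halpern_det_residual N :
  nrm (y N - T (y N)) <= 2 * R0 * (2 + series harmonic N) / N.+1%:R.
Proof.
have R00 : 0 <= R0 by exact: nrm_ge0.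
have H0 := series_harmonic_ge0 R N.
apply: le_trans (nrm_distD nrmP _ (y N.+1) _) _.
have -> : y N.+1 - T (y N) = N.+2%:R^-1 *: - (T (y N) - x0).
  by rewrite -onem_halpern_beta; apply/rowP => i; rewrite /y /= !mxE; ring.
rewrite (nrmZ nrmP) (nrmN nrmP) ger0_norm // (nrm_distC nrmP).
have N2 : 0 < N.+2%:R :> R by rewrite ltr0n.
apply: (@le_trans _ _ (2 * R0 * (2 + series harmonic N) / N.+2%:R)).
  rewrite [X in _ <= X](_ : _ = 2 * R0 * (1 + series harmonic N) / N.+2%:R
                                + N.+2%:R^-1 * (2 * R0)); last by ring.
  apply: lerD; last by rewrite ler_pM2l ?invr_gt0 // halpern_det_T_x0.
  by rewrite ler_pdivlMr // mulrC halpern_det_diff.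
by rewrite ler_wpM2l ?mulr_ge0 ?addr_ge0 // lef_pV2 ?posrE ?ltr0n // ler_nat.
Qed.

End halpern_deterministic.

(* [sigma^2 + 1] rather than [sigma^2]: the tangent-line argument of
   [iid_int_sqrt_sum_le] needs a positive variance bound. *)
Definition noise_const {R : realType} {d : nat} (nrm : 'rV[R]_d -> R)
  (sigma : R) : R := euclid_const nrm * Num.sqrt (sigma ^+ 2 + 1).

Section halpern_stochastic.
Context {R : realType} {d : nat} {nrm : 'rV[R]_d -> R}.
Context {T : 'rV[R]_d -> 'rV[R]_d}.
Context {dX : measure_display} {Xi : measurableType dX}.
Context {D : R.-pker (Rd R d) ~> Xi} {Tt : 'rV[R]_d -> Xi -> 'rV[R]_d}.
Context {sigma : R} {x0 : 'rV[R]_d}.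
Hypothesis nrmP : is_norm nrm.
Hypothesis T_ne : nonexpansive nrm T.
Hypothesis Tt_mean : forall (x : 'rV[R]_d) (i : 'I_d),
  (D x).-integrable setT (fun xi => (Tt x xi ord0 i)%:E) /\
  (\int[D x]_xi (Tt x xi ord0 i)%:E = (T x ord0 i)%:E)%E.
Hypothesis Tt_var : forall x : 'rV[R]_d,
  (\int[D x]_xi (sqnorm2 (Tt x xi - T x))%:E <= (sigma ^+ 2)%:E)%E.

Lemma noise_const_ge0 : 0 <= noise_const nrm sigma.
Proof. by rewrite mulr_ge0 ?sqrtr_ge0 ?euclid_const_ge0. Qed.

Section one_step.
Context {beta : nat -> R} {k : nat -> nat} {n : nat}.
Hypothesis beta_ge0 : 0 <= beta n.+1.
Hypothesis k_gt0 : (0 < k n.+1)%N.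
Let y := halpern_det T beta x0.

Lemma halpern_step_dev x s : size s = k n.+1 ->
  nrm (halpern_step Tt x0 beta k n.+1 x s - y n.+1) <=
  beta n.+1 * ((k n.+1)%:R^-1 * (euclid_const nrm *
     Num.sqrt (sqnorm2 (\sum_(xi <- s) (Tt x xi - T x)))) + nrm (x - y n)).
Proof.
move=> sk; set K := k n.+1; set S := \sum_(xi <- s) (Tt x xi - T x).
have K0 : 0 < K%:R :> R by rewrite ltr0n.
have -> : halpern_step Tt x0 beta k n.+1 x s - y n.+1 =
          beta n.+1 *: (K%:R^-1 *: S + (T x - T (y n))).
  rewrite /halpern_step /S sumrB big_const_seq count_predT iter_addr_0 sk.
  rewrite -[T x *+ K]scaler_nat; apply/rowP => i; rewrite /y /= !mxE.
  by field; rewrite gt_eqF.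
rewrite (nrmZ nrmP) ger0_norm //; apply: ler_wpM2l => //.
apply: le_trans (nrmD nrmP _ _) _.
rewrite (nrmZ nrmP) ger0_norm; last by rewrite invr_ge0 ltW.
apply: lerD; last exact: T_ne.
by apply: ler_wpM2l; [rewrite invr_ge0 ltW | exact: nrm_le_euclid].
Qed.

Lemma halpern_step_le x (A B : R) : 0 <= A -> 0 <= B ->
  (iid_int (D x) (k n.+1)
     (fun s => (A * nrm (halpern_step Tt x0 beta k n.+1 x s - y n.+1) + B)%:E)
   <= (A * beta n.+1 *
         (nrm (x - y n) + noise_const nrm sigma / Num.sqrt (k n.+1)%:R)
       + B)%:E)%E.
Proof.
move=> A0 B0; set K := k n.+1.
have K0 : 0 < K%:R :> R by rewrite ltr0n.
set a := A * beta n.+1 * K%:R^-1 * euclid_const nrm.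
set b := A * beta n.+1 * nrm (x - y n) + B.
have a0 : 0 <= a.
  by rewrite !mulr_ge0 ?euclid_const_ge0 // invr_ge0 ltW.
have b0 : 0 <= b by rewrite addr_ge0 // !mulr_ge0 ?nrm_ge0.
apply: (@le_trans _ _ (iid_int (D x) K (fun s =>
   (a * Num.sqrt (sqnorm2 (0 + \sum_(xi <- s) (Tt x xi - T x))) + b)%:E))).
  apply: le_iid_int => s sK; apply/andP; split.
    by rewrite lee_fin addr_ge0 // mulr_ge0 ?nrm_ge0.
  rewrite lee_fin add0r /b addrA lerD2r.
  apply: le_trans (ler_wpM2l A0 (halpern_step_dev x s sK)) _.
  by rewrite /a mulrDr mulrDr !mulrA.
have s2_gt0 : 0 < sigma ^+ 2 + 1 by rewrite ltr_wpDl ?sqr_ge0.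
have var1 x' : (\int[D x']_xi (sqnorm2 (Tt x' xi - T x'))%:E
                <= (sigma ^+ 2 + 1)%:E)%E.
  by apply: le_trans (Tt_var x') _; rewrite lee_fin lerDl.
apply: le_trans (iid_int_sqrt_sum_le (D x) (Tt x) (T x) _
  (@prob_kernel _ _ _ _ _ D x) (Tt_mean x) (var1 x) s2_gt0 K 0 _ _ a0 b0) _.
rewrite lee_fin /b addrA lerD2r sqnorm20 add0r sqrtrM ?ler0n //.
rewrite /a /noise_const; set q := Num.sqrt K%:R.
have q0 : 0 < q by rewrite sqrtr_gt0.
rewrite -[K%:R](sqr_sqrtr (ltW K0)) -/q le_eqVlt; apply/orP; left.
by apply/eqP; field; rewrite gt_eqF.
Qed.

End one_step.

Lemma halpern_exp_ge0 beta k f : (forall x, (0 <= f x)%E) ->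
  forall r n x, (0 <= halpern_exp D Tt x0 beta k f r n x)%E.
Proof.
move=> f0; elim=> [|r IH] n x; first exact: f0.
by apply: iid_int_ge0 => s _; exact: IH.
Qed.

Let k4 (n : nat) := (n ^ 4)%N.
Let y := halpern_det T (halpern_beta R) x0.

(* The product of the stepsizes from [n+1] to [N] telescopes to
   [(n+1)/(N+1)]. *)
Lemma halpern_exp_le f (A B : R) N : 0 <= A -> 0 <= B ->
  (forall x, (0 <= f x)%E /\ (f x <= (A * nrm (x - y N) + B)%:E)%E) ->
  forall r n x, (n + r)%N = N ->
  (halpern_exp D Tt x0 (halpern_beta R) k4 f r n x <=
    (A * n.+1%:R / N.+1%:R * nrm (x - y n) +
     A * noise_const nrm sigma / N.+1%:R *
       (series harmonic N - series harmonic n) + B)%:E)%E.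
Proof.
move=> A0 B0 fP; elim=> [|r IH] n x nrN.
  rewrite addn0 in nrN; rewrite nrN subrr mulr0 addr0 mulfK ?pnatr_eq0 //.
  exact: (fP x).2.
have N0 : 0 < N.+1%:R :> R by rewrite ltr0n.
set A' := A * n.+2%:R / N.+1%:R.
set B' := A * noise_const nrm sigma / N.+1%:R *
  (series harmonic N - series harmonic n.+1) + B.
have A'0 : 0 <= A' by rewrite divr_ge0 ?mulr_ge0 // ltW.
have B'0 : 0 <= B'.
  rewrite addr_ge0 // mulr_ge0 //.
    by rewrite divr_ge0 ?(ltW N0) // mulr_ge0 // noise_const_ge0.
  rewrite subr_ge0.
  by apply: le_series_harmonic; rewrite -nrN addnS ltnS leq_addr.
apply: (@le_trans _ _ (iid_int (D x) (k4 n.+1) (fun s =>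
   (A' * nrm (halpern_step Tt x0 (halpern_beta R) k4 n.+1 x s - y n.+1)
    + B')%:E))).
  apply: le_iid_int => s _; apply/andP; split.
    by apply: halpern_exp_ge0 => x'; exact: (fP x').1.
  by rewrite /B' addrA; apply: IH; rewrite -nrN addSnnS.
have k4_gt0 : (0 < k4 n.+1)%N by rewrite expn_gt0.
apply: le_trans
  (halpern_step_le (halpern_beta_ge0 R n.+1) k4_gt0 x _ _ A'0 B'0) _.
rewrite lee_fin /k4 natrX (_ : 4 = 2 * 2)%N // exprM sqrtr_sqr.
rewrite ger0_norm ?exprn_ge0 // /A' /B' seriesSr /= /halpern_beta.
rewrite le_eqVlt; apply/orP; left; apply/eqP.
by field; rewrite !nat1r -natrD !pnatr_eq0.
Qed.

Context {z : 'rV[R]_d}.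
Hypothesis Tz : T z = z.

Lemma halpern_expect_residual_le N :
  (halpern_expect D Tt x0 (halpern_beta R) k4 N (fun x => (nrm (x - T x))%:E)
   <= ((2 * noise_const nrm sigma + 2 * nrm (x0 - z)) * (2 + series harmonic N)
       / N.+1%:R)%:E)%E.
Proof.
set B := nrm (y N - T (y N)).
have fP x : (0 <= (nrm (x - T x))%:E)%E /\
            ((nrm (x - T x))%:E <= (2 * nrm (x - y N) + B)%:E)%E.
  split; first by rewrite lee_fin nrm_ge0.
  rewrite lee_fin; apply: le_trans (nrm_distD nrmP _ (y N) _) _.
  have := nrm_distD nrmP (y N) (T (y N)) (T x).
  by have := T_ne (y N) x; rewrite (nrm_distC nrmP (y N) x) /B; lra.
apply: le_trans (halpern_exp_le _ 2 B N (ler0n R 2) (nrm_ge0 nrmP _) fP N 0 x0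
                   (add0n N)) _.
have -> : y 0 = x0 by [].
rewrite lee_fin subrr nrm0 // mulr0 add0r.
have -> : series (@harmonic R) 0 = 0 by rewrite /series /= big_geq.
set c := noise_const nrm sigma.
rewrite subr0 (mulrDl (2 * c)) (mulrDl (2 * c * _)).
apply: lerD; last exact: halpern_det_residual.
rewrite [leLHS]mulrAC ler_pM2r ?invr_gt0 ?ltr0n //.
by apply: ler_wpM2l; [rewrite mulr_ge0 // noise_const_ge0 | rewrite lerDr].
Qed.

End halpern_stochastic.

Lemma ln_le_subr1 {R : realType} (y : R) : 0 < y -> ln y <= y - 1.
Proof.
move=> y0; have := @le_ln1Dx R (y - 1).
by rewrite [1 + _]addrC subrK; apply; lra.
Qed.

Lemma series_harmonic_le_ln (R : realType) N : (0 < N)%N ->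
  series (@harmonic R) N <= 1 + ln N%:R.
Proof.
case: N => // N _; elim: N => [|N IH].
  by rewrite /series /= big_nat1 invr1 ln1 addr0.
rewrite seriesSr (_ : harmonic N.+1 = N.+2%:R^-1 :> R) //.
have N1 : 0 < N.+1%:R :> R by rewrite ltr0n.
have N2 : 0 < N.+2%:R :> R by rewrite ltr0n.
have : ln (1 - N.+2%:R^-1) <= - N.+2%:R^-1 :> R.
  by apply: le_ln1Dx; rewrite ltrN2 invf_lt1 // ltr1n.
rewrite (_ : 1 - N.+2%:R^-1 = N.+1%:R / N.+2%:R); last first.
  by rewrite -(natr1 N.+1); field; rewrite gt_eqF // ltr_wpDl.
rewrite ln_div ?posrE //; move: IH.
by set H := series _ _; set a := ln _; set b := ln _; set c := _^-1; lra.
Qed.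

Lemma sum_pow4_le N : (\sum_(1 <= n < N.+1) n ^ 4 <= N ^ 5)%N.
Proof.
elim: N => [|N IH]; first by rewrite big_geq.
rewrite big_nat_recr //= (expnS N.+1 4) mulSn addnC leq_add2l.
by apply: leq_trans IH _; rewrite expnS leq_mul2l leq_exp2r ?leqnSn ?orbT.
Qed.

Lemma ln_count_bound {R : realType} (K eps : R) : 0 <= K -> 0 < eps ->
  ln (32 * (K + 1) ^+ 2 * (1 + `|ln eps|) / eps)
  <= 29 + 2 * K + 2 * (1 + `|ln eps|).
Proof.
move=> K0 eps0; set L := 1 + `|ln eps|.
have K1 : 0 < K + 1 by lra.
have L0 : 0 < L by rewrite ltr_pwDl.
rewrite (_ : 32 * _ * L / eps = 32 * ((K + 1) ^+ 2 * (L / eps))); last by ring.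
rewrite lnM ?posrE ?mulr_gt0 ?exprn_gt0 ?invr_gt0 //.
rewrite lnM ?posrE ?exprn_gt0 ?mulr_gt0 ?invr_gt0 //.
rewrite lnXn // lnM ?posrE ?invr_gt0 // lnV ?posrE // mulr2n.
have : ln 32 <= 32 - 1 :> R by apply: ln_le_subr1.
have := ln_le_subr1 _ K1; have := ln_le_subr1 _ L0.
have := ler_norm (- ln eps); rewrite normrN.
by rewrite /L; lra.
Qed.

(* With [N] about [M L / eps], [ln N] is O(K + L) by [ln_count_bound], so
   [K (2 + H_N)] is O(K^2 L); [M = 16 (K+1)^2] absorbs it. *)
Lemma halpern_iteration_count {R : realType} (K eps : R) : 0 <= K -> 0 < eps ->
  exists N : nat, K * (2 + series harmonic N) / N.+1%:R <= eps /\
    N%:R <= 32 * (K + 1) ^+ 2 * (1 + `|ln eps|) / eps.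
Proof.
move=> K0 eps0; set L := 1 + `|ln eps|; set M := 16 * (K + 1) ^+ 2.
have L1 : 1 <= L by rewrite lerDl.
have M16 : 16 <= M by rewrite /M ler_peMr // expr2; nra.
have MK : 2 * K <= M by rewrite /M expr2; nra.
have [epsK|epsK] := lerP (2 * K) eps.
  exists 0%N; split; last by rewrite divr_ge0 ?(ltW eps0) // !mulr_ge0 //; lra.
  by rewrite /series /= big_geq // addr0 divr1; lra.
set x := M * L / eps.
have xe : x * eps = M * L by rewrite /x divfK ?gt_eqF.
have x1 : 1 <= x by rewrite /x ler_pdivlMr // mul1r; nra.
set N := (Num.truncn x).+1.
have xN : x < N%:R by exact: truncnS_gt.
have Nx : N%:R <= x + 1 by rewrite /N -natr1 lerD2r truncn_le; lra.
have x2 : 32 * (K + 1) ^+ 2 * L / eps = 2 * x by rewrite /x /M; ring.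
have lnN : ln N%:R <= 29 + 2 * K + 2 * L.
  apply: le_trans _ (ln_count_bound K eps K0 eps0).
  by rewrite x2 ler_ln ?posrE ?ltr0n //; lra.
exists N; split.
  have HN := series_harmonic_le_ln R N (ltn0Sn _).
  rewrite ler_pdivrMr ?ltr0n //.
  have : K * (2 + series harmonic N) <= K * ((34 + 2 * K) * L).
    by rewrite ler_wpM2l //; nra.
  have : K * ((34 + 2 * K) * L) <= M * L by rewrite mulrA ler_pM2r /M; nra.
  have : eps * x <= eps * N.+1%:R by rewrite ler_pM2l // -natr1; lra.
  nra.
by rewrite x2; lra.
Qed.

Theorem corollary1 (R : realType) (d : nat) (nrm : 'rV[R]_d -> R)
  (T : 'rV[R]_d -> 'rV[R]_d)
  (dX : measure_display) (Xi : measurableType dX)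
  (D : R.-pker (Rd R d) ~> Xi)
  (Tt : 'rV[R]_d -> Xi -> 'rV[R]_d) (sigma : R) (x0 : 'rV[R]_d) :
  is_norm nrm ->
  nonexpansive nrm T ->
  (exists z, T z = z) ->
  (* joint measurability of the oracle (implicit regularity) *)
  measurable_fun setT (fun p : (Rd R d * Xi)%type => (Tt p.1 p.2 : Rd R d)) ->
  (* unbiasedness: E_{xi ~ D_x} Tt(x, xi) = T x *)
  (forall (x : 'rV[R]_d) (i : 'I_d),
     (D x).-integrable setT (fun xi => (Tt x xi ord0 i)%:E) /\
     (\int[D x]_xi (Tt x xi ord0 i)%:E = (T x ord0 i)%:E)%E) ->
  (* uniformly bounded variance in the Euclidean norm *)
  (forall x : 'rV[R]_d,
     (\int[D x]_xi (sqnorm2 (Tt x xi - T x))%:E <= (sigma ^+ 2)%:E)%E) ->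
  exists (C : R) (p : nat), forall eps : R, 0 < eps ->
    exists N : nat,
      (halpern_expect D Tt x0 (fun n : nat => (n%:R / (n.+1)%:R : R)%R) (fun n => (n ^ 4)%N)
         N (fun x => (nrm (x - T x))%:E) <= eps%:E)%E /\
      ((\sum_(1 <= n < N.+1) n ^ 4)%N%:R <= C * eps ^- 5 * (1 + `|ln eps|) ^+ p).
Proof.
move=> nrmP T_ne [z Tz] _ Tt_mean Tt_var.
set K := 2 * noise_const nrm sigma + 2 * nrm (x0 - z).
have K0 : 0 <= K.
  apply: addr_ge0; apply: mulr_ge0 => //.
    exact: noise_const_ge0.
  exact: nrm_ge0.
exists ((32 * (K + 1) ^+ 2) ^+ 5), 5%N => eps eps0.
have [N [N_res N_le]] := halpern_iteration_count K eps K0 eps0.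
exists N; split.
  apply: le_trans (halpern_expect_residual_le nrmP T_ne Tt_mean Tt_var Tz N) _.
  by rewrite lee_fin.
apply: (@le_trans _ _ (N%:R ^+ 5)); first by rewrite -natrX ler_nat sum_pow4_le.
apply: le_trans (_ : _ <= (32 * (K + 1) ^+ 2 * (1 + `|ln eps|) / eps) ^+ 5) _.
  by rewrite lerXn2r ?nnegrE // (le_trans _ N_le).
by rewrite !exprMn exprVn mulrAC.
Qed.
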